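(* Let $a=e_1$, let $\Sigma$ be symmetric positive definite with minimal eigenvalue $\gamma_{\min}$, and let $\widehat\Sigma$ be symmetric with $\delta:=\|\Sigma-\widehat\Sigma\|_{op}\le\gamma_{\min}/2$. Let $(\underline n^*,\underline\lambda^* )$ minimize $R(\underline n,\underline\lambda)$ and let $(\hat{\underline n},\hat{\underline\lambda})$ minimize $\widehat R(\underline n,\underline\lambda)$, both over feasible unbiased pairs. Then \[ R(\hat{\underline n},\hat{\underline\lambda})\le R(\underline n^*,\underline\lambda^* )+\frac{4\delta}{\gamma_{\min}}\,\sigma^2_{\mathrm{classical}}. \]
   Context: $\mathcal I$ is a collection of nonempty subsets of $\{1,\dots,k\}$; $P_I:\mathbb{R}^k\to\mathbb{R}^{|I|}$ the coordinate projection onto $I$; for a matrix $A$, $A_I=P_IAP_I^\top$. Costs $c_I\in\mathbb{R}^m_{\ge0}$, budget $B\in\mathbb{R}^m_{\ge0}$, vector inequalities componentwise; an allocation $\underline n\in\mathbb{Z}^{\mathcal I}_{\ge0}$ is feasible if $\sum_In_Ic_I\le B$; weights $\lambda_I\in\mathbb{R}^{|I|}$ are unbiased if $\sum_{I:n_I>0}P_I^\top\lambda_I=a$. Define $R(\underline n,\underline\lambda)=\sum_{I:n_I>0}\frac1{n_I}\lambda_I^\top\Sigma_I\lambda_I$ and $\widehat R(\underline n,\underline\lambda)=\sum_{I:n_I>0}\frac1{n_I}\lambda_I^\top\widehat\Sigma_I\lambda_I$. $\sigma^2_{\mathrm{classical}}=\Sigma_{11}/n^0_{I^0}$ for some $I^0\in\mathcal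 I$ with $1\in I^0$, where $n^0_{I^0}\ge1$ is the largest integer $n$ with $nc_{I^0}\le B$. *)

From HB Require Import structures.
From mathcomp Require Import all_boot all_order all_algebra.
From mathcomp Require Import all_classical all_reals.
Set Implicit Arguments. Unset Strict Implicit. Unset Printing Implicit Defensive.
Import Order.TTheory GRing.Theory Num.Theory.
Local Open Scope ring_scope.
Local Open Scope classical_set_scope.

Section Defs.
Variables (R : realType) (k m : nat).

(* Coordinate projection P_I : R^k -> R^{|I|}, as a |I| x k matrix;
   the coordinates of I are listed in increasing order via enum_val. *)
Definition projI (I : {set 'I_k}) : 'M[R]_(#|I|, k) :=
  \matrix_(i < #|I|, j < k) (((enum_val i : 'I_k) == j)%:R).

Definition subM (A : 'M[R]_k) (I : {set 'I_k}) : 'M[R]_#|I| :=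
  projI I *m A *m (projI I)^T.

Definition sym_mx (A : 'M[R]_k) : Prop := A^T = A.

Definition posdef_mx (A : 'M[R]_k) : Prop :=
  forall x : 'cV[R]_k, x != 0 -> 0 < (x^T *m A *m x) 0 0.

Definition min_eigenvalue (A : 'M[R]_k) (gamma : R) : Prop :=
  eigenvalue A gamma /\ forall mu, eigenvalue A mu -> gamma <= mu.

Definition vnorm2 (x : 'cV[R]_k) : R := \sum_i (x i 0) ^+ 2.

Definition opnorm (A : 'M[R]_k) : R :=
  sup [set Num.sqrt (vnorm2 (A *m x)) | x in [set x : 'cV[R]_k | vnorm2 x = 1]].

Definition vle (u v : 'cV[R]_m) : Prop := forall r, u r 0 <= v r 0.

Definition feasible (II : {set {set 'I_k}}) (c : {set 'I_k} -> 'cV[R]_m)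
  (B : 'cV[R]_m) (n : {set 'I_k} -> nat) : Prop :=
  vle (\sum_(I in II) (n I)%:R *: c I) B.

Definition unbiased (II : {set {set 'I_k}}) (a : 'cV[R]_k)
  (n : {set 'I_k} -> nat) (lam : forall I : {set 'I_k}, 'cV[R]_#|I|) : Prop :=
  \sum_(I in II | (0 < n I)%N) (projI I)^T *m lam I = a.

(* R(n, lambda) with covariance S (use Sigma for R, Sigma-hat for hat R) *)
Definition risk (II : {set {set 'I_k}}) (S : 'M[R]_k)
  (n : {set 'I_k} -> nat) (lam : forall I : {set 'I_k}, 'cV[R]_#|I|) : R :=
  \sum_(I in II | (0 < n I)%N) (n I)%:R^-1 * ((lam I)^T *m subM S I *m lam I) 0 0.

Definition is_minimizer (II : {set {set 'I_k}}) (c : {set 'I_k} -> 'cV[R]_m)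
  (B : 'cV[R]_m) (a : 'cV[R]_k) (S : 'M[R]_k)
  (n0 : {set 'I_k} -> nat) (lam0 : forall I : {set 'I_k}, 'cV[R]_#|I|) : Prop :=
  [/\ feasible II c B n0, unbiased II a n0 lam0 &
      forall n lam, feasible II c B n -> unbiased II a n lam ->
        risk II S n0 lam0 <= risk II S n lam].

End Defs.

From HB Require Import structures.
From mathcomp Require Import all_boot all_order all_algebra.
From mathcomp Require Import all_classical all_reals.
From mathcomp Require Import ring lra.
Import Order.TTheory GRing.Theory Num.Theory.
Local Open Scope ring_scope.

(* For every pair, [|R - hat R| = |risk (Sigma - hat Sigma)| <= (delta / gamma) R], because
   [|x^T (Sigma - hat Sigma) x| <= delta |x|^2 <= (delta / gamma) x^T Sigma x].  With
   [t := delta / gamma <= 1/2] this chains into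
   [(1 - t) R(hat) <= hat R(hat) <= hat R(star) <= (1 + t) R(star)], so
   [R(hat) <= R(star) + 4 t R(star)]; finally [R(star) <= sigma^2_classical], since
   spending the whole budget on the pool [I0] is a feasible unbiased pair.
   The bound [gamma |x|^2 <= x^T Sigma x] is derived from the eigenvalue condition
   without the spectral theorem, by a supremum argument. *)

Set Implicit Arguments. Unset Strict Implicit. Unset Printing Implicit Defensive.

Section BilinearForm.
Variables (R : realType) (n : nat).
Implicit Types (A B : 'M[R]_n) (x y : 'cV[R]_n).

Definition form A x y : R := (x^T *m A *m y) 0 0.

Lemma formE A x y : form A x y = \sum_i \sum_j x i 0 * A i j * y j 0.
Proof.
rewrite /form mxE exchange_big; apply: eq_bigr => j _.
by rewrite mxE mulr_suml; apply: eq_bigr => i _; rewrite mxE.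
Qed.

Lemma formDl A x1 x2 y : form A (x1 + x2) y = form A x1 y + form A x2 y.
Proof. by rewrite /form linearD /= !mulmxDl mxE. Qed.

Lemma formDr A x y1 y2 : form A x (y1 + y2) = form A x y1 + form A x y2.
Proof. by rewrite /form mulmxDr mxE. Qed.

Lemma formZl A t x y : form A (t *: x) y = t * form A x y.
Proof. by rewrite /form linearZ /= -!scalemxAl mxE. Qed.

Lemma formZr A t x y : form A x (t *: y) = t * form A x y.
Proof. by rewrite /form -scalemxAr mxE. Qed.

Lemma formBA A B x y : form (A - B) x y = form A x y - form B x y.
Proof.
rewrite /form mulmxBr mulmxBl.
by set u := _ *m y; set v := _ *m y; rewrite !mxE.
Qed.

Lemma formC A x y : A^T = A -> form A x y = form A y x.
Proof.
move=> symA; have -> : form A x y = (x^T *m A *m y)^T 0 0 by rewrite mxE.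
by rewrite !trmx_mul trmxK symA mulmxA.
Qed.

Lemma vnorm2_form x : vnorm2 x = form 1%:M x x.
Proof. by rewrite /form mulmx1 mxE; apply: eq_bigr => i _; rewrite mxE expr2. Qed.

Lemma form_scalar s x : form s%:M x x = s * vnorm2 x.
Proof. by rewrite vnorm2_form /form mul_mx_scalar -scalemxAl mxE mulmx1. Qed.

Lemma vnorm2_ge0 x : 0 <= vnorm2 x.
Proof. by apply: sumr_ge0 => i _; rewrite sqr_ge0. Qed.

Lemma vnorm2Z t x : vnorm2 (t *: x) = t ^+ 2 * vnorm2 x.
Proof. by rewrite !vnorm2_form formZl formZr mulrA -expr2. Qed.

Lemma vnorm2_mulmx A x : vnorm2 (A *m x) = form (A^T *m A) x x.
Proof. by rewrite vnorm2_form /form mulmx1 trmx_mul !mulmxA. Qed.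

Lemma normM_coord_le_vnorm2 x i j : `|x i 0 * x j 0| <= vnorm2 x.
Proof.
have coord_le k : `|x k 0| ^+ 2 <= vnorm2 x.
  rewrite real_normK ?num_real // /vnorm2 (bigD1 k) //= lerDl.
  by apply: sumr_ge0 => l _; rewrite sqr_ge0.
have := sqr_ge0 (`|x i 0| - `|x j 0|); have := coord_le i; have := coord_le j.
rewrite normrM; nra.
Qed.

Lemma form_norm_le A x : `|form A x x| <= (\sum_i \sum_j `|A i j|) * vnorm2 x.
Proof.
rewrite formE mulr_suml; apply: le_trans (ler_norm_sum _ _ _) _.
apply: ler_sum => i _; rewrite mulr_suml; apply: le_trans (ler_norm_sum _ _ _) _.
apply: ler_sum => j _; rewrite [_ * A i j]mulrC -mulrA normrM ler_wpM2l //.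
exact: normM_coord_le_vnorm2.
Qed.

Lemma form_eq0 A x : vnorm2 x = 0 -> form A x x = 0.
Proof.
move=> x0; apply/eqP; rewrite -normr_le0.
by apply: le_trans (form_norm_le _ _) _; rewrite x0 mulr0.
Qed.

End BilinearForm.

Lemma quadratic_ge0_discr (R : realFieldType) (a b c : R) : 0 <= c ->
  (forall t, 0 <= a + 2 * t * b + t ^+ 2 * c) -> b ^+ 2 <= a * c.
Proof.
move=> c_ge0 ge0; have := ge0 0; rewrite mulr0 mul0r expr0n mul0r !addr0 => a_ge0.
have [c_gt0|] := ltrP 0 c.
  have c_inv_gt0 : 0 < c^-1 by rewrite invr_gt0.
  rewrite -subr_ge0 -(pmulr_lge0 _ c_inv_gt0).
  have -> : (a * c - b ^+ 2) / c = a + 2 * (- b / c) * b + (- b / c) ^+ 2 * c.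
    by field; rewrite gt_eqF.
  exact: ge0.
move=> c_le0; have c0 : c = 0 by apply/eqP; rewrite eq_le c_le0.
rewrite c0 mulr0; have [->|b_neq0] := eqVneq b 0; first by rewrite expr0n.
have := ge0 (- (a + 1) / (2 * b)); rewrite c0 mulr0 addr0.
have -> : 2 * (- (a + 1) / (2 * b)) * b = - (a + 1) by field; rewrite b_neq0.
lra.
Qed.

Section PositiveSemidefinite.
Variables (R : realType) (n : nat) (A : 'M[R]_n).
Hypotheses (symA : A^T = A) (psdA : forall x, 0 <= form A x x).

Lemma form_CauchySchwarz x y : form A x y ^+ 2 <= form A x x * form A y y.
Proof.
apply: quadratic_ge0_discr (psdA y) _ => t.
have := psdA (x + t *: y); rewrite !(formDl, formDr, formZl, formZr) (formC x y symA).
by congr (_ <= _); ring.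
Qed.

(* With [z := A^-1 x], Cauchy-Schwarz gives [|x|^4 = (x^T A z)^2 <= (x^T A x) (x^T A^-1 x)],
   and the last factor is at most [T |x|^2] for [T] the entrywise 1-norm of [A^-1]. *)
Lemma unitmx_psd_coercive : A \in unitmx ->
  exists2 eta : R, 0 < eta & forall x, eta * vnorm2 x <= form A x x.
Proof.
move=> unitA; set T := \sum_i \sum_j `|invmx A i j|.
have T_ge0 : 0 <= T by do 2!apply: sumr_ge0 => ? _.
exists (T + 1)^-1; first by rewrite invr_gt0 ltr_wpDl.
move=> x; set z := invmx A *m x.
have Az : A *m z = x by rewrite /z mulKVmx.
have xAz : form A x z = vnorm2 x by rewrite vnorm2_form /form -mulmxA Az mulmx1.
have zAz : form A z z = form (invmx A) x x.
  by rewrite [form A z z]/form -mulmxA Az /z trmx_mul trmx_inv symA.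
have := form_CauchySchwarz x z; rewrite xAz zAz.
have le_T : form (invmx A) x x <= T * vnorm2 x.
  exact: le_trans (ler_norm _) (form_norm_le _ _).
have := vnorm2_ge0 x; have := psdA x.
set v := vnorm2 x; set q := form A x x; set b := form (invmx A) x x.
move=> q_ge0 v_ge0 CS; rewrite ler_pdivrMl ?ltr_wpDl //.
have [->|v_neq0] := eqVneq v 0; first by rewrite mulr_ge0 ?addr_ge0.
have v_gt0 : 0 < v by rewrite lt_def v_neq0.
have : v ^+ 2 <= q * T * v.
  by apply: le_trans CS _; rewrite -mulrA ler_wpM2l.
rewrite expr2 ler_pM2r // => v_le; nra.
Qed.

End PositiveSemidefinite.

Section RayleighLowerBound.
Variables (R : realType) (n : nat) (A : 'M[R]_n).
Hypothesis symA : A^T = A.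

Definition rayleigh_lb (s : R) : Prop := forall x, s * vnorm2 x <= form A x x.

Lemma rayleigh_lb_le s t : t <= s -> rayleigh_lb s -> rayleigh_lb t.
Proof.
by move=> le_ts lb_s x; apply: le_trans (lb_s x); rewrite ler_wpM2r ?vnorm2_ge0.
Qed.

Lemma rayleigh_lb_entrywise : rayleigh_lb (- \sum_i \sum_j `|A i j|).
Proof. by move=> x; have := form_norm_le A x; rewrite ler_norml mulNr => /andP[]. Qed.

Lemma rayleigh_lb_sup (S : set R) :
  has_sup S -> (forall s, S s -> rayleigh_lb s) -> rayleigh_lb (sup S).
Proof.
move=> supS lbS x; rewrite leNgt; apply/negP => lt_q.
have [x0|x_neq0] := eqVneq (vnorm2 x) 0.
  by move: lt_q; rewrite x0 mulr0 form_eq0 // ltxx.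
have x_gt0 : 0 < vnorm2 x by rewrite lt_def x_neq0 vnorm2_ge0.
have eps_gt0 : 0 < (sup S * vnorm2 x - form A x x) / vnorm2 x.
  by rewrite divr_gt0 // subr_gt0.
have [t St lt_t] := sup_adherent eps_gt0 supS.
have := lbS t St x; apply/negP; rewrite -ltNge.
have : (sup S - (sup S * vnorm2 x - form A x x) / vnorm2 x) * vnorm2 x < t * vnorm2 x.
  by rewrite ltr_pM2r.
by rewrite mulrBl -mulrA mulVf ?mulr1 // opprB addrCA subrr addr0.
Qed.

Lemma rayleigh_lb_shift s : ~ eigenvalue A s -> rayleigh_lb s ->
  exists2 eta : R, 0 < eta & rayleigh_lb (s + eta).
Proof.
move=> not_eig lb_s; pose B := A - s%:M.
have formB x : form B x x = form A x x - s * vnorm2 x by rewrite formBA form_scalar.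
have symB : B^T = B by rewrite /B linearB /= symA tr_scalar_mx.
have psdB x : 0 <= form B x x by rewrite formB subr_ge0.
have unitB : B \in unitmx.
  rewrite unitmxE unitfE; apply/negP => /det0P[v v_neq0 vB]; apply: not_eig.
  apply/eigenvalueP; exists v => //; apply/eqP.
  by rewrite -subr_eq0 -mul_mx_scalar -mulmxBr vB.
have [eta eta_gt0 coerB] := unitmx_psd_coercive symB psdB unitB.
by exists eta => // x; have := coerB x; rewrite formB mulrDl lerBrDl addrC.
Qed.

(* The best constant [s := sup S] is itself a lower bound; if [s < g], then [A - s]
   is invertible and positive semidefinite, hence coercive, so [s] could be increased. *)
Lemma eigenvalue_rayleigh_lb g :
  (forall mu, eigenvalue A mu -> g <= mu) -> rayleigh_lb g.
Proof.
move=> eig_ge; pose S := fun s => s <= g /\ rayleigh_lb s.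
set s0 := Num.min g (- \sum_i \sum_j `|A i j|).
have S_s0 : S s0.
  split; first by rewrite ge_min lexx.
  by apply: rayleigh_lb_le rayleigh_lb_entrywise; rewrite ge_min lexx orbT.
have supS : has_sup S by split; [exists s0 | exists g => s []].
have lb_sup : rayleigh_lb (sup S) by apply: rayleigh_lb_sup supS _ => s [].
have [le_g|lt_sup] := lerP g (sup S); first exact: rayleigh_lb_le lb_sup.
have not_eig : ~ eigenvalue A (sup S) by move/eig_ge; rewrite leNgt lt_sup.
have [eta eta_gt0 lb_eta] := rayleigh_lb_shift not_eig lb_sup.
have S_next : S (Num.min g (sup S + eta)).
  by split; [rewrite ge_min lexx | apply: rayleigh_lb_le lb_eta; rewrite ge_min lexx orbT].
have := sup_upper_bound supS S_next; rewrite ge_min leNgt lt_sup /= leNgt.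
by rewrite ltrDl eta_gt0.
Qed.

End RayleighLowerBound.

Section OperatorNorm.
Variables (R : realType) (n : nat) (A : 'M[R]_n).

Lemma form_sqr_le x : form A x x ^+ 2 <= vnorm2 x * vnorm2 (A *m x).
Proof.
have psd1 (y : 'cV[R]_n) : 0 <= form 1%:M y y by rewrite -vnorm2_form vnorm2_ge0.
have := form_CauchySchwarz (trmx1 _ _) psd1 x (A *m x).
by rewrite -!vnorm2_form /form mulmx1 mulmxA.
Qed.

Lemma sqrt_vnorm2_le_opnorm u :
  vnorm2 u = 1 -> Num.sqrt (vnorm2 (A *m u)) <= opnorm A.
Proof.
move=> u1; apply: sup_upper_bound; last by exists u.
split; first by exists (Num.sqrt (vnorm2 (A *m u))), u.
exists (Num.sqrt (\sum_i \sum_j `|(A^T *m A) i j|)) => _ [v v1 <-].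
rewrite ler_sqrt; last by do 2!apply: sumr_ge0 => ? _.
rewrite vnorm2_mulmx; apply: le_trans (ler_norm _) _.
by apply: le_trans (form_norm_le _ _) _; rewrite v1 mulr1.
Qed.

Lemma form_norm_le_opnorm x : `|form A x x| <= opnorm A * vnorm2 x.
Proof.
have [x0|x_neq0] := eqVneq (vnorm2 x) 0; first by rewrite form_eq0 // x0 normr0 mulr0.
have x_gt0 : 0 < vnorm2 x by rewrite lt_def x_neq0 vnorm2_ge0.
set r := Num.sqrt (vnorm2 x); have r_gt0 : 0 < r by rewrite sqrtr_gt0.
set u := r^-1 *: x.
have xE : x = r *: u by rewrite /u scalerA divff ?gt_eqF // scale1r.
have u1 : vnorm2 u = 1 by rewrite vnorm2Z exprVn sqr_sqrtr ?mulVf ?vnorm2_ge0.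
have -> : form A x x = vnorm2 x * form A u u.
  by rewrite {1 2}xE formZl formZr mulrA -expr2 sqr_sqrtr ?vnorm2_ge0.
rewrite normrM ger0_norm ?vnorm2_ge0 // mulrC ler_wpM2r ?vnorm2_ge0 //.
apply: le_trans (sqrt_vnorm2_le_opnorm u1); rewrite -sqrtr_sqr ler_sqrt ?vnorm2_ge0 //.
by have := form_sqr_le u; rewrite u1 mul1r.
Qed.

End OperatorNorm.

Lemma form_delta (R : realType) n (S : 'M[R]_n) (e : 'I_n) :
  form S (delta_mx e 0) (delta_mx e 0) = S e e.
Proof. by rewrite /form trmx_delta -rowE -colE !mxE. Qed.

Section CoordinateProjection.
Variables (R : realType) (k : nat) (I : {set 'I_k}) (e : 'I_k).
Hypothesis eI : e \in I.

Lemma projI_delta :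
  projI R I *m (delta_mx e 0 : 'cV[R]_k) = delta_mx (enum_rank_in eI e) 0.
Proof.
apply/matrixP => i j; rewrite !mxE ord1 eqxx andbT.
rewrite (bigD1 e) //= big1 ?addr0; last first.
  by move=> l /negbTE le; rewrite !mxE le /= mulr0.
rewrite !mxE eqxx mulr1; have [->|ne] := eqVneq i (enum_rank_in eI e).
  by rewrite enum_rankK_in // eqxx.
suff /negbTE -> : enum_val i != e by [].
by apply: contra ne => /eqP ei; apply/eqP/enum_val_inj; rewrite enum_rankK_in.
Qed.

Lemma trmx_projI_delta :
  (projI R I)^T *m (projI R I *m delta_mx e 0) = (delta_mx e 0 : 'cV[R]_k).
Proof.
rewrite projI_delta; apply/matrixP => j z; rewrite !mxE ord1 eqxx andbT.
rewrite (bigD1 (enum_rank_in eI e)) //= big1 ?addr0; last first.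
  by move=> l /negbTE le; rewrite !mxE le /= ?mulr0 ?mul0r.
by rewrite !mxE eqxx mulr1 enum_rankK_in // eq_sym.
Qed.

End CoordinateProjection.

Section Risk.
Variables (R : realType) (k m : nat) (II : {set {set 'I_k}}).
Implicit Types (S Sh : 'M[R]_k) (n : {set 'I_k} -> nat)
  (lam : forall I : {set 'I_k}, 'cV[R]_#|I|).

Lemma subM_formE S (I : {set 'I_k}) (l : 'cV[R]_#|I|) :
  (l^T *m subM S I *m l) 0 0 = form S ((projI R I)^T *m l) ((projI R I)^T *m l).
Proof. by rewrite /subM /form trmx_mul trmxK !mulmxA. Qed.

Lemma risk_ge0 S n lam : (forall x, 0 <= form S x x) -> 0 <= risk II S n lam.
Proof.
by move=> psdS; apply: sumr_ge0 => I _; rewrite subM_formE mulr_ge0 ?invr_ge0.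
Qed.

Lemma riskB S Sh n lam : risk II (S - Sh) n lam = risk II S n lam - risk II Sh n lam.
Proof.
rewrite /risk -sumrB; apply: eq_bigr => I _.
by rewrite !subM_formE formBA mulrBr.
Qed.

Lemma risk_perturbation S Sh (g d : R) n lam : 0 < g -> 0 <= d ->
  rayleigh_lb S g -> (forall x, `|form (S - Sh) x x| <= d * vnorm2 x) ->
  `|risk II S n lam - risk II Sh n lam| <= d / g * risk II S n lam.
Proof.
move=> g_gt0 d_ge0 lbS dS; rewrite -riskB /risk mulr_sumr.
apply: le_trans (ler_norm_sum _ _ _) _; apply: ler_sum => I _.
rewrite !subM_formE normrM ger0_norm ?invr_ge0 // mulrCA ler_wpM2l ?invr_ge0 //.
set y := _ *m lam I; apply: le_trans (dS y) _.
have -> : d * vnorm2 y = d / g * (g * vnorm2 y) by rewrite mulrA divfK ?lt0r_neq0.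
by rewrite ler_wpM2l ?divr_ge0 ?(ltW g_gt0) ?lbS.
Qed.

(* The allocation behind [sigma^2_classical]: [N] samples of the pool [I0] only. *)
Definition single_pool (I0 : {set 'I_k}) (N : nat) (I : {set 'I_k}) : nat :=
  if I == I0 then N else 0%N.

Variables (I0 : {set 'I_k}) (N : nat).
Hypotheses (I0_in : I0 \in II) (N_gt0 : (0 < N)%N).

Lemma big_single_pool (V : nmodType) (F : {set 'I_k} -> V) :
  \sum_(I in II | (0 < single_pool I0 N I)%N) F I = F I0.
Proof.
rewrite (bigD1 I0) /=; last by rewrite I0_in /single_pool eqxx.
by rewrite big1 ?addr0 // => I /andP[/andP[_]]; rewrite /single_pool; case: ifP.
Qed.

Lemma feasible_single_pool (c : {set 'I_k} -> 'cV[R]_m) (B : 'cV[R]_m) :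
  vle (N%:R *: c I0) B -> feasible II c B (single_pool I0 N).
Proof.
rewrite /feasible (bigD1 I0) //= big1 ?addr0 /single_pool ?eqxx //.
by move=> I /andP[_ /negbTE ->]; rewrite scale0r.
Qed.

Variables (e : 'I_k) (S : 'M[R]_k).
Hypothesis eI0 : e \in I0.

Definition pool_weights (I : {set 'I_k}) : 'cV[R]_#|I| := projI R I *m delta_mx e 0.

Lemma unbiased_single_pool :
  unbiased II (delta_mx e 0) (single_pool I0 N) pool_weights.
Proof. by rewrite /unbiased big_single_pool /pool_weights trmx_projI_delta. Qed.

Lemma risk_single_pool :
  risk II S (single_pool I0 N) pool_weights = S e e / N%:R.
Proof.
rewrite /risk big_single_pool subM_formE /pool_weights trmx_projI_delta //.
by rewrite form_delta /single_pool eqxx mulrC.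
Qed.

End Risk.

Lemma posdef_eigenvalue_gt0 (R : realType) n (A : 'M[R]_n) g :
  posdef_mx A -> eigenvalue A g -> 0 < g.
Proof.
move=> pdA /eigenvalueP[v vA v_neq0].
have vT_neq0 : v^T != 0 by rewrite trmx_eq0.
have := pdA _ vT_neq0; rewrite trmxK vA -scalemxAl mxE.
have := vnorm2_ge0 v^T; rewrite vnorm2_form /form mulmx1 trmxK; nra.
Qed.

Lemma perturbed_minimizer_le (R : realFieldType) (t x y xh yh C : R) :
  0 <= t <= 1 / 2 -> 0 <= y <= C ->
  `|x - xh| <= t * x -> `|y - yh| <= t * y -> xh <= yh -> x <= y + 4 * t * C.
Proof.
move=> /andP[t_ge0 t_le] /andP[y_ge0 y_le].
rewrite !ler_norml => /andP[_ hx] /andP[hy _] le_h.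
have le_x : (1 - t) * x <= (1 + t) * y by lra.
have tC_ge0 : 0 <= t * C by rewrite mulr_ge0 // (le_trans y_ge0).
rewrite -(ler_pM2l (_ : 0 < 1 - t)); last by lra.
apply: le_trans le_x _; nra.
Qed.

Theorem theoremE3 (R : realType) (k m : nat) (hk : (0 < k)%N)
  (II : {set {set 'I_k}}) (c : {set 'I_k} -> 'cV[R]_m) (B : 'cV[R]_m)
  (Sigma Sigmah : 'M[R]_k) (gamma delta : R)
  (ns nh : {set 'I_k} -> nat)
  (ls lh : forall I : {set 'I_k}, 'cV[R]_#|I|)
  (I0 : {set 'I_k}) (n0 : nat) :
  let e1 : 'I_k := Ordinal hk in
  let a : 'cV[R]_k := delta_mx e1 0 in
  (forall I, I \in II -> (0 < #|I|)%N) ->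
  (forall I r, I \in II -> 0 <= c I r 0) ->
  (forall r, 0 <= B r 0) ->
  sym_mx Sigma -> posdef_mx Sigma -> min_eigenvalue Sigma gamma ->
  sym_mx Sigmah ->
  delta = opnorm (Sigma - Sigmah) -> delta <= gamma / 2 ->
  is_minimizer II c B a Sigma ns ls ->
  is_minimizer II c B a Sigmah nh lh ->
  I0 \in II -> e1 \in I0 -> (1 <= n0)%N ->
  vle (n0%:R *: c I0) B ->
  (forall n : nat, vle (n%:R *: c I0) B -> (n <= n0)%N) ->
  risk II Sigma nh lh
    <= risk II Sigma ns ls + (4 * delta / gamma) * (Sigma e1 e1 / n0%:R).
Proof.
move=> e1 a _ _ _ symS pdS [eig_g min_g] _ delta_def delta_le [feas_s unb_s opt_s]
  [_ _ opt_h] I0_in e1_I0 n0_gt0 feas_0 _.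
have g_gt0 : 0 < gamma := posdef_eigenvalue_gt0 pdS eig_g.
have lbS : rayleigh_lb Sigma gamma := eigenvalue_rayleigh_lb symS min_g.
have dS x : `|form (Sigma - Sigmah) x x| <= delta * vnorm2 x.
  by rewrite delta_def form_norm_le_opnorm.
have d_ge0 : 0 <= delta.
  have a1 : vnorm2 a = 1 by rewrite vnorm2_form form_delta mxE eqxx.
  have := dS a; rewrite a1 mulr1.
  exact: le_trans (normr_ge0 _).
have psdS x : 0 <= form Sigma x x.
  by apply: le_trans (lbS x); rewrite mulr_ge0 ?vnorm2_ge0 ?ltW.
have le_classical : risk II Sigma ns ls <= Sigma e1 e1 / n0%:R.
  rewrite -(risk_single_pool I0_in n0_gt0 Sigma e1_I0).
  by apply: opt_s; [exact: feasible_single_pool | exact: unbiased_single_pool].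
rewrite -(mulrA 4); apply: (perturbed_minimizer_le (xh := risk II Sigmah nh lh)
  (yh := risk II Sigmah ns ls)); rewrite ?risk_ge0 ?le_classical ?opt_h //.
- by rewrite divr_ge0 ?(ltW g_gt0) //= ler_pdivrMr // mulrC mul1r.
- exact: risk_perturbation.
- exact: risk_perturbation.
Qed.
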